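(* Let $X$ be a compact metric space and $f:X\dashrightarrow X$ a continuous open-dense defined map which is good with respect to iterates. 1) If $\hat\mu$ is a positive strong submeasure on $\Gamma_{f,\infty}$ with $(\sigma_f)_*(\hat\mu)=\hat\mu$, then $\mu=(\pi_1)_*(\hat\mu)$ satisfies $f_*(\mu)\ge\mu$. 2) If $0\ne\mu_0\in SM^+(X)$ satisfies $f_*(\mu_0)=\mu_0$, then there exists a non-zero positive Borel measure $\hat\mu_0$ on $\Gamma_{f,\infty}$ with $(\sigma_f)_*(\hat\mu_0)=\hat\mu_0$, $\|\hat\mu_0\|=\|\mu_0\|$ and $(\pi_1)_*(\hat\mu_0)\le\mu_0$. Moreover the set $\{\hat\mu\in SM^+(\Gamma_{f,\infty}):(\pi_1)_*(\hat\mu)\le\mu_0,\ (\sigma_f)_*(\hat\mu)=\hat\mu\}$ has a largest element.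
   Context: Positive strong submeasures on a compact metric space $W$ ($SM^+(W)$): sub-linear, bounded, non-decreasing maps $C^0(W)\to\mathbb{R}$, with norm $\|\mu\|$ the least $C$ with $|\mu(\varphi)|\le C\|\varphi\|_{L^\infty}$; $\le$ is pointwise inequality. For continuous $g$, $g_*(\mu)(\varphi)=\mu(\varphi\circ g)$. For a continuous open-dense defined map $f:X\dashrightarrow X$ (continuous on the open dense set $\mathrm{OpenDom}(f)$, $I(f)$ its complement), $f_*(\mu)(\varphi)=\inf\{\mu(\psi):\psi\in C^0(X),\psi\ge E(\varphi\circ f)\}$, where $E(\varphi\circ f)$ equals $\varphi\circ f$ on $\mathrm{OpenDom}(f)$ and $\limsup_{y\in\mathrm{OpenDom}(f),y\to x}\varphi(f(y))$ at other $x$. $f$ is good with respect to iterates if $\Omega_{f,\infty}=\{x\in\mathrm{OpenDom}(f):f^n(x)\notin I(f)\ \forall n\}$ is dense and its complement nowhere dense. $\Gamma_{f,\infty}$ is the closure in $X^{\mathbb{N}}$ (product topology) of $\{(x,f(x),f^2(x),\ldots):x\in\Omega_{f,\infty}\}$, $\sigma_f$ the shift on it and $\pi_1$ the first-coordinate projection. *)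

From Stdlib Require Import Reals Lra Lia ClassicalEpsilon.
Open Scope R_scope.



Definition is_lower_bound (S : R -> Prop) (m : R) : Prop := forall r, S r -> m <= r.
Definition is_glb (S : R -> Prop) (m : R) : Prop :=
  is_lower_bound S m /\ forall m', is_lower_bound S m' -> m' <= m.
Definition Rinf (S : R -> Prop) : R := epsilon (inhabits 0) (fun m => is_glb S m).

Definition is_metric {X : Type} (d : X -> X -> R) : Prop :=
  (forall x y, 0 <= d x y) /\ (forall x y, d x y = 0 <-> x = y) /\
  (forall x y, d x y = d y x) /\ (forall x y z, d x z <= d x y + d y z).

Definition seq_compact {X : Type} (d : X -> X -> R) : Prop :=
  forall u : nat -> X, exists (phi : nat -> nat) (l : X),
    (forall n, (phi n < phi (S n))%nat) /\
    forall eps, 0 < eps -> exists N, forall n, (N <= n)%nat -> d (u (phi n)) l < eps.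

Definition is_open {X : Type} (d : X -> X -> R) (A : X -> Prop) : Prop :=
  forall x, A x -> exists r, 0 < r /\ forall y, d x y < r -> A y.
Definition is_dense {X : Type} (d : X -> X -> R) (A : X -> Prop) : Prop :=
  forall x eps, 0 < eps -> exists y, A y /\ d x y < eps.
Definition closure {X : Type} (d : X -> X -> R) (A : X -> Prop) (z : X) : Prop :=
  forall eps, 0 < eps -> exists a, A a /\ d z a < eps.
Definition nowhere_dense {X : Type} (d : X -> X -> R) (A : X -> Prop) : Prop :=
  ~ exists x r, 0 < r /\ forall z, d x z < r -> closure d A z.

Definition C0 {X : Type} (d : X -> X -> R) (phi : X -> R) : Prop :=
  forall x eps, 0 < eps -> exists delta, 0 < delta /\
    forall y, d x y < delta -> Rabs (phi x - phi y) < eps.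

(* ---------- Continuous open-dense defined maps ----------
   The map is the pair (U, f): U = OpenDom(f) open dense, f continuous on U;
   values of f outside U are irrelevant. I(f) = complement of U. *)
Definition open_dense_map {X : Type} (d : X -> X -> R) (U : X -> Prop) (f : X -> X) : Prop :=
  is_open d U /\ is_dense d U /\
  forall x, U x -> forall eps, 0 < eps -> exists delta, 0 < delta /\
    forall y, U y -> d x y < delta -> d (f x) (f y) < eps.

Definition Omega {X : Type} (U : X -> Prop) (f : X -> X) (x : X) : Prop :=
  U x /\ forall n : nat, U (Nat.iter n f x).

Definition good_iterates {X : Type} (d : X -> X -> R) (U : X -> Prop) (f : X -> X) : Prop :=
  is_dense d (Omega U f) /\ nowhere_dense d (fun x => ~ Omega U f x).

(* Gamma_{f,infty}: closure in X^N (product topology) of the orbits of points of Omega *)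
Definition Gamma {X : Type} (d : X -> X -> R) (U : X -> Prop) (f : X -> X) (s : nat -> X) : Prop :=
  forall (N : nat) eps, 0 < eps -> exists x, Omega U f x /\
    forall n, (n <= N)%nat -> d (s n) (Nat.iter n f x) < eps.

Definition GammaT {X : Type} (d : X -> X -> R) (U : X -> Prop) (f : X -> X) : Type :=
  { s : nat -> X | Gamma d U f s }.

Definition C0_Gamma {X : Type} (d : X -> X -> R) (U : X -> Prop) (f : X -> X)
  (phi : GammaT d U f -> R) : Prop :=
  forall s eps, 0 < eps -> exists (N : nat) delta, 0 < delta /\
    forall t : GammaT d U f,
      (forall n, (n <= N)%nat -> d (proj1_sig s n) (proj1_sig t n) < delta) ->
      Rabs (phi s - phi t) < eps.

Lemma iter_succ_r {X : Type} (f : X -> X) (n : nat) (x : X) :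
  Nat.iter (S n) f x = Nat.iter n f (f x).
Proof. induction n as [|n IH]; simpl; [reflexivity|]. simpl in IH. rewrite IH. reflexivity. Qed.

Lemma Gamma_shift {X : Type} (d : X -> X -> R) (U : X -> Prop) (f : X -> X) (s : nat -> X) :
  Gamma d U f s -> Gamma d U f (fun n => s (S n)).
Proof.
  intros H N eps Heps. destruct (H (S N) eps Heps) as [x [[Hx Hit] Hd]].
  exists (f x). split.
  - split.
    + apply (Hit 1%nat).
    + intro n. rewrite <- iter_succ_r. apply Hit.
  - intros n Hn. rewrite <- iter_succ_r. apply Hd. lia.
Qed.

Definition sigma_f {X : Type} (d : X -> X -> R) (U : X -> Prop) (f : X -> X)
  (s : GammaT d U f) : GammaT d U f :=
  exist _ (fun n => proj1_sig s (S n)) (Gamma_shift d U f (proj1_sig s) (proj2_sig s)).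
Definition pi_1 {X : Type} (d : X -> X -> R) (U : X -> Prop) (f : X -> X)
  (s : GammaT d U f) : X := proj1_sig s O.

(* ---------- Positive strong submeasures ----------
   A functional mu on the continuous functions (those satisfying C);
   its values on other functions are irrelevant. *)
Definition is_SMplus {W : Type} (C : (W -> R) -> Prop) (mu : (W -> R) -> R) : Prop :=
  (forall phi psi, C phi -> C psi -> mu (fun w => phi w + psi w) <= mu phi + mu psi) /\
  (forall c phi, 0 <= c -> C phi -> mu (fun w => c * phi w) = c * mu phi) /\
  (exists K, forall phi M, C phi -> (forall w, Rabs (phi w) <= M) -> Rabs (mu phi) <= K * M) /\
  (forall phi psi, C phi -> C psi -> (forall w, phi w <= psi w) -> mu phi <= mu psi).

(* linear (positive Borel measures = positive linear functionals, by Riesz) *)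
Definition is_linear_fn {W : Type} (C : (W -> R) -> Prop) (mu : (W -> R) -> R) : Prop :=
  (forall phi psi, C phi -> C psi -> mu (fun w => phi w + psi w) = mu phi + mu psi) /\
  (forall c phi, C phi -> mu (fun w => c * phi w) = c * mu phi).

Definition SMnorm {W : Type} (C : (W -> R) -> Prop) (mu : (W -> R) -> R) : R :=
  Rinf (fun K => 0 <= K /\
    forall phi M, C phi -> (forall w, Rabs (phi w) <= M) -> Rabs (mu phi) <= K * M).

Definition SM_le {W : Type} (C : (W -> R) -> Prop) (mu nu : (W -> R) -> R) : Prop :=
  forall phi, C phi -> mu phi <= nu phi.
Definition SM_eq {W : Type} (C : (W -> R) -> Prop) (mu nu : (W -> R) -> R) : Prop :=
  forall phi, C phi -> mu phi = nu phi.
Definition SM_nonzero {W : Type} (C : (W -> R) -> Prop) (mu : (W -> R) -> R) : Prop :=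
  exists phi, C phi /\ mu phi <> 0.

Definition push {V W : Type} (g : V -> W) (mu : (V -> R) -> R) : (W -> R) -> R :=
  fun phi => mu (fun v => phi (g v)).

(* psi >= E(phi o f) pointwise *)
Definition dominates_E {X : Type} (d : X -> X -> R) (U : X -> Prop) (f : X -> X)
  (phi psi : X -> R) : Prop :=
  forall x, (U x -> phi (f x) <= psi x) /\
    (~ U x ->
      forall eps, 0 < eps -> exists delta, 0 < delta /\
        forall y, U y -> d x y < delta -> phi (f y) <= psi x + eps).

Definition pushf {X : Type} (d : X -> X -> R) (U : X -> Prop) (f : X -> X)
  (mu : (X -> R) -> R) : (X -> R) -> R :=
  fun phi => Rinf (fun r => exists psi, C0 d psi /\ dominates_E d U f phi psi /\ r = mu psi).

(* For s in Gamma, either s_0 lies in OpenDom(f) and s_1 = f(s_0), or s_1 is a limit of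
   values f(y) with y -> s_0 in OpenDom(f); in both cases phi(s_1) <= psi(s_0) whenever
   psi >= E(phi o f). For a shift-invariant submeasure muh on Gamma this reads
   mu(phi) = muh(phi o pi_1 o sigma) <= mu(psi), whence mu <= f_*(mu).

   Conversely, when f_*(mu0) = mu0 the same fact moves any continuous g one step along the
   shift at an arbitrarily small cost in mu0. Therefore
     p(psi) = inf { mu0(g) : A_N psi <= g o pi_1 for some N },
   A_N psi being the average of psi over 2^N iterates of the shift, is sublinear on bounded
   functions on Gamma, with p(c) >= c mu0(1), and p(psi o sigma - psi) <= 0 since the
   averages of a coboundary tend to 0. A Hahn-Banach extension of c |-> c mu0(1) dominated
   by p is then positive, linear, shift-invariant, of norm mu0(1) = ||mu0||, and projects
   below mu0. The largest admissible submeasure is the pointwise supremum of the admissible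
   ones, a family that the previous step makes nonempty. Throughout, continuous functions
   on Gamma are bounded by a diagonal argument, X being sequentially compact. *)

From Stdlib Require Import Reals Lra Lia ClassicalEpsilon Classical FunctionalExtensionality.
From mathcomp Require classical_sets.
Open Scope R_scope.

Lemma Rabs_le_between (a b : R) : Rabs a <= b -> - b <= a <= b.
Proof. unfold Rabs. destruct (Rcase_abs a); intros; lra. Qed.

Lemma Rabs_mult_small (c e : R) : 0 < e ->
  exists e', 0 < e' /\ forall a, Rabs a < e' -> Rabs (c * a) < e.
Proof.
  intros he. pose proof (Rabs_pos c) as hc.
  exists (e / (Rabs c + 1)). split; [apply Rdiv_lt_0_compat; lra |].
  intros a ha. rewrite Rabs_mult.
  apply Rle_lt_trans with (Rabs c * (e / (Rabs c + 1))).
  - apply Rmult_le_compat_l; lra.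
  - apply (Rmult_lt_reg_r (Rabs c + 1)); [lra |]. field_simplify; lra.
Qed.

Definition bounded_fn {W : Type} (psi : W -> R) : Prop := exists B, forall w, Rabs (psi w) <= B.

Lemma bounded_fn_const {W : Type} (c : R) : bounded_fn (fun _ : W => c).
Proof. exists (Rabs c). intro. lra. Qed.

Lemma bounded_fn_add {W : Type} (p q : W -> R) :
  bounded_fn p -> bounded_fn q -> bounded_fn (fun w => p w + q w).
Proof.
  intros [B1 H1] [B2 H2]. exists (B1 + B2). intro w.
  pose proof (Rabs_triang (p w) (q w)). specialize (H1 w). specialize (H2 w). lra.
Qed.

Lemma bounded_fn_scal {W : Type} (c : R) (p : W -> R) :
  bounded_fn p -> bounded_fn (fun w => c * p w).
Proof.
  intros [B H]. exists (Rabs c * B). intro w. rewrite Rabs_mult.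
  apply Rmult_le_compat_l; [apply Rabs_pos | apply H].
Qed.

Lemma bounded_fn_comp {V W : Type} (g : V -> W) (psi : W -> R) :
  bounded_fn psi -> bounded_fn (fun v => psi (g v)).
Proof. intros [B HB]. exists B. intro v. apply HB. Qed.

Lemma bounded_fn_lower {W : Type} (psi : W -> R) : bounded_fn psi -> exists c, forall w, c <= psi w.
Proof. intros [B HB]. exists (- B). intro w. apply (Rabs_le_between _ _ (HB w)). Qed.

Lemma pow2_unbounded (a eps : R) : 0 < eps -> exists N, a <= eps * 2 ^ N.
Proof.
  intros he. destruct (Pow_x_infinity 2 ltac:(rewrite Rabs_pos_eq; lra) (a / eps)) as [N HN].
  exists N. specialize (HN N (le_n _)). rewrite Rabs_pos_eq in HN by (apply pow_le; lra).
  apply Rge_le, (Rmult_le_compat_l eps) in HN; [|lra]. field_simplify in HN; lra.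
Qed.

Lemma glb_exists (S : R -> Prop) :
  (exists r, S r) -> (exists m, is_lower_bound S m) -> exists m, is_glb S m.
Proof.
  intros [r Hr] [m Hm].
  set (E := fun x => S (- x)).
  assert (HE : forall x, E x <-> S (- x)) by (intro; reflexivity).
  destruct (completeness E) as [l [Hl1 Hl2]].
  - exists (- m). intros x Ex. specialize (Hm _ Ex). lra.
  - exists (- r). apply HE. rewrite Ropp_involutive. exact Hr.
  - exists (- l). split.
    + intros y Sy. assert (Ey : E (- y)) by (apply HE; rewrite Ropp_involutive; exact Sy).
      specialize (Hl1 _ Ey). lra.
    + intros m' Hm'. assert (Hub : is_upper_bound E (- m')).
      { intros x Ex. specialize (Hm' _ Ex). lra. }
      specialize (Hl2 _ Hub). lra.
Qed.

Lemma Rinf_glb (S : R -> Prop) :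
  (exists r, S r) -> (exists m, is_lower_bound S m) -> is_glb S (Rinf S).
Proof. intros h1 h2. unfold Rinf. apply epsilon_spec. apply glb_exists; assumption. Qed.

Lemma Rinf_le (S : R -> Prop) (m r : R) : is_lower_bound S m -> S r -> Rinf S <= r.
Proof. intros hm hr. apply (Rinf_glb S); eauto. Qed.

Lemma le_Rinf (S : R -> Prop) (m : R) : (exists r, S r) -> is_lower_bound S m -> m <= Rinf S.
Proof. intros hr hm. apply (Rinf_glb S); eauto. Qed.

Lemma Rinf_approx (S : R -> Prop) (m eps : R) :
  (exists r, S r) -> is_lower_bound S m -> 0 < eps -> exists r, S r /\ r < Rinf S + eps.
Proof.
  intros hr hm he. apply NNPP. intro Hn.
  assert (Hlb : is_lower_bound S (Rinf S + eps)).
  { intros r Sr. apply Rnot_lt_le. intro h. apply Hn. eauto. }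
  pose proof (le_Rinf S _ hr Hlb). lra.
Qed.

Lemma Rinf_unique (S : R -> Prop) (m : R) : is_glb S m -> Rinf S = m.
Proof.
  intros Hm. assert (H : is_glb S (Rinf S)) by (unfold Rinf; apply epsilon_spec; exists m; exact Hm).
  destruct Hm as [a1 a2], H as [b1 b2].
  apply Rle_antisym; [apply a2; exact b1 | apply b2; exact a1].
Qed.

Lemma SMnorm_attained {T : Type} (C : (T -> R) -> Prop) (mu : (T -> R) -> R) (K : R) :
  0 <= K -> C (fun _ => 1) -> Rabs (mu (fun _ => 1)) = K ->
  (forall phi M, C phi -> (forall w, Rabs (phi w) <= M) -> Rabs (mu phi) <= K * M) ->
  SMnorm C mu = K.
Proof.
  intros h0 h1 hK hb. apply Rinf_unique. split.
  - intros K' [_ hK']. specialize (hK' _ 1 h1 ltac:(intro; cbv beta; rewrite Rabs_R1; lra)). lra.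
  - intros m' hm'. apply hm'. split; assumption.
Qed.

(** * Hahn-Banach extension *)

Lemma Zorn_union (T : Type) (P : (T -> Prop) -> Prop) :
  (forall F : (T -> Prop) -> Prop, (forall G, F G -> P G) ->
     (forall G H, F G -> F H -> (forall t, G t -> H t) \/ (forall t, H t -> G t)) ->
     P (fun t => exists2 G, F G & G t)) ->
  exists A, P A /\ forall B, (forall t, A t -> B t) -> ~ (forall t, B t -> A t) -> ~ P B.
Proof.
  intros H. destruct (@classical_sets.Zorn_bigcup T P) as [A [HA HB]].
  - intros F HFP Htot. apply H; [exact HFP | exact Htot].
  - exists A. split; [exact HA |]. intros B H1 H2. apply HB. split; assumption.
Qed.

Lemma chain_union_pick2 {T : Type} (F : (T -> Prop) -> Prop) (C : T -> Prop) (a b : T) :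
  (forall G H, F G -> F H -> (forall t, G t -> H t) \/ (forall t, H t -> G t)) ->
  (exists2 G, F G & G a) \/ C a -> (exists2 G, F G & G b) \/ C b ->
  exists Y, (F Y \/ Y = fun _ => False) /\ (Y a \/ C a) /\ (Y b \/ C b).
Proof.
  intros Htot [[Ga FGa Ya] | Ca] [[Gb FGb Yb] | Cb].
  - destruct (Htot Ga Gb FGa FGb) as [s | s].
    + exists Gb. auto.
    + exists Ga. auto.
  - exists Ga. auto.
  - exists Gb. auto.
  - exists (fun _ => False). auto.
Qed.

Section HahnBanach.
Variables (W : Type) (w0 : W) (V : (W -> R) -> Prop) (p : (W -> R) -> R) (m : R).
Hypothesis V_const : forall c, V (fun _ => c).
Hypothesis V_add : forall x y, V x -> V y -> V (fun w => x w + y w).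
Hypothesis V_scal : forall c x, V x -> V (fun w => c * x w).
Hypothesis p_add : forall x y, V x -> V y -> p (fun w => x w + y w) <= p x + p y.
Hypothesis p_hom : forall c x, 0 < c -> V x -> p (fun w => c * x w) = c * p x.
Hypothesis p_const : forall c, c * m <= p (fun _ => c).

Record partial_extension (G : (W -> R) * R -> Prop) : Prop := {
  pe_functional : forall x a b, G (x, a) -> G (x, b) -> a = b;
  pe_dominated : forall x a, G (x, a) -> V x /\ a <= p x;
  pe_add : forall x a y b, G (x, a) -> G (y, b) -> G (fun w => x w + y w, a + b);
  pe_scal : forall x a c, G (x, a) -> G (fun w => c * x w, c * a);
  pe_const : forall c, G (fun _ => c, c * m) }.

Definition const_graph (pr : (W -> R) * R) : Prop := exists c, pr = (fun _ => c, c * m).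

Lemma partial_extension_ext (G G' : (W -> R) * R -> Prop) :
  (forall pr, G pr <-> G' pr) -> partial_extension G -> partial_extension G'.
Proof.
  intros E [H1 H2 H3 H4 H5]. split.
  - intros x a b h1 h2. apply E in h1, h2. eauto.
  - intros x a h. apply E in h. eauto.
  - intros x a y b h1 h2. apply E. apply E in h1, h2. eauto.
  - intros x a c h. apply E. apply E in h. eauto.
  - intros c. apply E. eauto.
Qed.

Lemma const_graph_partial_extension : partial_extension const_graph.
Proof.
  split.
  - intros x a b [c Hc] [c' Hc']. injection Hc as -> ->. injection Hc' as E ->.
    rewrite (equal_f E w0). reflexivity.
  - intros x a [c Hc]. injection Hc as -> ->. split; [apply V_const | apply p_const].
  - intros x a y b [c Hc] [c' Hc']. injection Hc as -> ->. injection Hc' as -> ->.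
    exists (c + c'). f_equal. ring.
  - intros x a c' [c Hc]. injection Hc as -> ->. exists (c' * c). f_equal. ring.
  - intros c. exists c. reflexivity.
Qed.

Lemma p_scale_inv (c : R) (x : W -> R) :
  0 < c -> V x -> p x = c * p (fun w => / c * x w).
Proof.
  intros hc Vx. rewrite <- p_hom by auto.
  f_equal. extensionality w. field. lra.
Qed.

Section Extend.
Variables (G : (W -> R) * R -> Prop) (z : W -> R).
Hypothesis HG : partial_extension G.
Hypothesis Vz : V z.

Lemma partial_extension_gap x a y b : G (x, a) -> G (y, b) ->
  b - p (fun w => y w + (-1) * z w) <= p (fun w => x w + z w) - a.
Proof.
  intros hx hy.
  destruct (pe_dominated _ HG _ _ hx) as [Vx _], (pe_dominated _ HG _ _ hy) as [Vy _].
  destruct (pe_dominated _ HG _ _ (pe_add _ HG _ _ _ _ hx hy)) as [_ hle].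
  pose proof (p_add (fun w => x w + z w) (fun w => y w + (-1) * z w)
                (V_add _ _ Vx Vz) (V_add _ _ Vy (V_scal (-1) _ Vz))) as h.
  cbv beta in h. replace (fun w => x w + z w + (y w + -1 * z w)) with (fun w => x w + y w) in h
    by (extensionality w; ring).
  lra.
Qed.

Lemma partial_extension_separator : exists al,
  (forall y b, G (y, b) -> b - p (fun w => y w + (-1) * z w) <= al) /\
  (forall x a, G (x, a) -> al <= p (fun w => x w + z w) - a).
Proof.
  set (E := fun r => exists y b, G (y, b) /\ r = b - p (fun w => y w + (-1) * z w)).
  pose proof (pe_const _ HG 0) as G0.
  destruct (completeness E) as [al [Hal1 Hal2]].
  - exists (p (fun w => (fun _ => 0) w + z w) - 0 * m). intros r [y [b [hy ->]]].
    apply partial_extension_gap; assumption.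
  - eexists. exists (fun _ => 0), (0 * m). split; [exact G0 | reflexivity].
  - exists al. split.
    + intros y b hy. apply Hal1. exists y, b. auto.
    + intros x a hx. apply Hal2. intros r [y [b [hy ->]]]. apply partial_extension_gap; assumption.
Qed.

(* For t > 0 (resp. t < 0) divide by |t| and use the upper (resp. lower) bound on al. *)
Lemma extension_dominated al :
  (forall y b, G (y, b) -> b - p (fun w => y w + (-1) * z w) <= al) ->
  (forall x a, G (x, a) -> al <= p (fun w => x w + z w) - a) ->
  forall x a t, G (x, a) -> a + t * al <= p (fun w => x w + t * z w).
Proof.
  intros Hlo Hhi x a t hx.
  destruct (pe_dominated _ HG _ _ hx) as [Vx hax].
  assert (Vxt : V (fun w => x w + t * z w)) by auto.
  destruct (Rtotal_order t 0) as [tn | [-> | tp]].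
  - pose proof (Hlo _ _ (pe_scal _ HG _ _ (/ - t) hx)) as h.
    rewrite (p_scale_inv (- t)) by (lra || auto).
    replace (fun w => / - t * (x w + t * z w)) with (fun w => / - t * x w + -1 * z w)
      by (extensionality w; field; lra).
    apply (Rmult_le_compat_l (- t)) in h; [|lra].
    replace (- t * (/ - t * a - p (fun w => / - t * x w + -1 * z w)))
      with (a - (- t) * p (fun w => / - t * x w + -1 * z w)) in h by (field; lra).
    lra.
  - replace (fun w => x w + 0 * z w) with x by (extensionality w; ring). lra.
  - pose proof (Hhi _ _ (pe_scal _ HG _ _ (/ t) hx)) as h.
    rewrite (p_scale_inv t) by (lra || auto).
    replace (fun w => / t * (x w + t * z w)) with (fun w => / t * x w + z w)
      by (extensionality w; field; lra).
    apply (Rmult_le_compat_l t) in h; [|lra].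
    replace (t * (p (fun w => / t * x w + z w) - / t * a))
      with (t * p (fun w => / t * x w + z w) - a) in h by (field; lra).
    lra.
Qed.

Lemma partial_extension_extend : (forall a, ~ G (z, a)) ->
  exists G', partial_extension G' /\ (forall pr, G pr -> G' pr) /\ exists al, G' (z, al).
Proof.
  intros Hnz. destruct partial_extension_separator as [al [Hlo Hhi]].
  set (G' := fun pr : (W -> R) * R =>
    exists x a t, G (x, a) /\ pr = (fun w => x w + t * z w, a + t * al)).
  exists G'. split; [split | split].
  - intros u r1 r2 [x [a [t [hx e1]]]] [x' [a' [t' [hx' e2]]]].
    injection e1 as eu1 ->. injection e2 as eu2 ->. rewrite eu1 in eu2.
    destruct (Req_dec t t') as [<- | tne].
    + assert (x = x') as <-.
      { extensionality w. pose proof (equal_f eu2 w) as e. simpl in e. lra. }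
      rewrite (pe_functional _ HG _ _ _ hx hx'). reflexivity.
    + exfalso. apply (Hnz (/ (t - t') * (a' + (-1) * a))).
      replace z with (fun w => / (t - t') * (x' w + (-1) * x w)).
      * apply (pe_scal _ HG). apply (pe_add _ HG); [assumption |]. apply (pe_scal _ HG). assumption.
      * extensionality w. pose proof (equal_f eu2 w) as e. simpl in e.
        field_simplify_eq; lra.
  - intros u r [x [a [t [hx e]]]]. injection e as -> ->.
    destruct (pe_dominated _ HG _ _ hx) as [Vx _]. split; [auto |].
    apply extension_dominated; assumption.
  - intros u r v b [x [a [t [hx e]]]] [y [c [s [hy e']]]].
    injection e as -> ->. injection e' as -> ->.
    exists (fun w => x w + y w), (a + c), (t + s). split; [apply (pe_add _ HG); assumption |].
    f_equal; [extensionality w |]; ring.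
  - intros u r c [x [a [t [hx e]]]]. injection e as -> ->.
    exists (fun w => c * x w), (c * a), (c * t). split; [apply (pe_scal _ HG); assumption |].
    f_equal; [extensionality w |]; ring.
  - intros c. exists (fun _ => c), (c * m), 0. split; [apply (pe_const _ HG) |].
    f_equal; [extensionality w |]; ring.
  - intros [x a] hx. exists x, a, 0. split; [assumption |].
    f_equal; [extensionality w |]; ring.
  - exists al, (fun _ => 0), (0 * m), 1. split; [apply (pe_const _ HG) |].
    f_equal; [extensionality w |]; ring.
Qed.

End Extend.

(* The constants are adjoined to every graph so that the empty chain has an upper bound. *)
Lemma partial_extension_chain_union (F : ((W -> R) * R -> Prop) -> Prop) :
  (forall G, F G -> partial_extension (fun pr => G pr \/ const_graph pr)) ->
  (forall G H, F G -> F H -> (forall t, G t -> H t) \/ (forall t, H t -> G t)) ->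
  partial_extension (fun pr => (exists2 G, F G & G pr) \/ const_graph pr).
Proof.
  intros HF Htot. set (Uc := fun pr => exists2 G, F G & G pr).
  assert (Hpick : forall a b, Uc a \/ const_graph a -> Uc b \/ const_graph b ->
    exists Y, partial_extension (fun pr => Y pr \/ const_graph pr) /\
      (forall pr, Y pr \/ const_graph pr -> Uc pr \/ const_graph pr) /\
      (Y a \/ const_graph a) /\ (Y b \/ const_graph b)).
  { intros a b ha hb. destruct (chain_union_pick2 F const_graph a b Htot ha hb)
      as [Y [[FY | ->] [Ya Yb]]].
    - exists Y. split; [auto | split; [| auto]].
      intros pr [h | h]; [left; exists Y | right]; auto.
    - exists (fun _ => False). split; [| split; [tauto | auto]].
      apply (partial_extension_ext const_graph); [tauto | apply const_graph_partial_extension]. }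
  split.
  - intros x a b h1 h2. destruct (Hpick _ _ h1 h2) as [Y [HY [_ [k1 k2]]]].
    exact (pe_functional _ HY _ _ _ k1 k2).
  - intros x a h. destruct (Hpick _ _ h h) as [Y [HY [_ [k _]]]].
    exact (pe_dominated _ HY _ _ k).
  - intros x a y b h1 h2. destruct (Hpick _ _ h1 h2) as [Y [HY [sub [k1 k2]]]].
    exact (sub _ (pe_add _ HY _ _ _ _ k1 k2)).
  - intros x a c h. destruct (Hpick _ _ h h) as [Y [HY [sub [k _]]]].
    exact (sub _ (pe_scal _ HY _ _ c k)).
  - intros c. right. exists c. reflexivity.
Qed.

Lemma maximal_partial_extension_total (G : (W -> R) * R -> Prop) : partial_extension G ->
  (forall G', partial_extension G' -> (forall pr, G pr -> G' pr) -> forall pr, G' pr -> G pr) ->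
  forall z, V z -> exists a, G (z, a).
Proof.
  intros HG Hmax z Vz. apply NNPP. intros Hn.
  assert (Hn' : forall a, ~ G (z, a)) by (intros a ha; apply Hn; eauto).
  destruct (partial_extension_extend G z HG Vz Hn') as [G' [HG' [Hsub [al Hal]]]].
  exact (Hn' al (Hmax G' HG' Hsub _ Hal)).
Qed.

Theorem hahn_banach : exists L : (W -> R) -> R,
  (forall x y, V x -> V y -> L (fun w => x w + y w) = L x + L y) /\
  (forall c x, V x -> L (fun w => c * x w) = c * L x) /\
  (forall x, V x -> L x <= p x) /\ L (fun _ => 1) = m.
Proof.
  destruct (Zorn_union _ (fun G => partial_extension (fun pr => G pr \/ const_graph pr)))
    as [A [HA HAmax]]; [exact partial_extension_chain_union |].
  set (G := fun pr => A pr \/ const_graph pr).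
  assert (Htot : forall z, V z -> exists a, G (z, a)).
  { apply maximal_partial_extension_total; [exact HA |]. intros G' HG' Hsub pr h.
    left. revert pr h. apply NNPP. intro Hnot. apply (HAmax G').
    - intros t ht. apply Hsub. left. exact ht.
    - exact Hnot.
    - apply (partial_extension_ext G'); [| exact HG'].
      intro pr. split; [tauto |]. intros [h | h]; [exact h | apply Hsub; right; exact h]. }
  set (L := fun x => epsilon (inhabits 0) (fun a => G (x, a))).
  assert (HL : forall x, V x -> G (x, L x)) by (intros x Vx; apply epsilon_spec; auto).
  exists L. split; [| split; [| split]].
  - intros x y Vx Vy. eapply (pe_functional _ HA); [apply HL; auto |].
    apply (pe_add _ HA); apply HL; assumption.
  - intros c x Vx. eapply (pe_functional _ HA); [apply HL; auto |].
    apply (pe_scal _ HA); apply HL; assumption.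
  - intros x Vx. apply (pe_dominated _ HA _ _ (HL x Vx)).
  - pose proof (pe_const _ HA 1) as h. rewrite Rmult_1_l in h.
    eapply (pe_functional _ HA); [apply HL; apply V_const | exact h].
Qed.

End HahnBanach.

(** * Sequential compactness of countable products *)

Definition strictly_increasing (rho : nat -> nat) : Prop := forall n, (rho n < rho (S n))%nat.

Lemma strictly_increasing_ge (rho : nat -> nat) :
  strictly_increasing rho -> forall n, (n <= rho n)%nat.
Proof. intros H n. induction n; [lia |]. specialize (H n). lia. Qed.

Lemma strictly_increasing_lt (rho : nat -> nat) :
  strictly_increasing rho -> forall a b, (a < b)%nat -> (rho a < rho b)%nat.
Proof. intros H a b hab. induction hab; [apply H |]. specialize (H m). lia. Qed.

Lemma eventually_forall_le (P : nat -> nat -> Prop) :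
  (forall j, exists K, forall n, (K <= n)%nat -> P j n) ->
  forall N, exists K, forall n, (K <= n)%nat -> forall j, (j <= N)%nat -> P j n.
Proof.
  intros H N. induction N as [| N [K1 H1]].
  - destruct (H O) as [K HK]. exists K. intros n hn j hj.
    replace j with O by lia. apply HK, hn.
  - destruct (H (S N)) as [K2 H2]. exists (Nat.max K1 K2). intros n hn j hj.
    destruct (Nat.eq_dec j (S N)) as [-> | hne]; [apply H2 | apply H1]; lia.
Qed.

Section Diagonal.
Context {X : Type} (d : X -> X -> R).

Definition converges_along (u : nat -> X) (rho : nat -> nat) (l : X) : Prop :=
  forall eps, 0 < eps -> exists K, forall n, (K <= n)%nat -> d (u (rho n)) l < eps.

(* [nested ext v j] extracts, one coordinate after the other, subsequences along which
   the coordinates [0 .. j-1] of [v] converge; [ext] is a choice of extraction. *)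
Fixpoint nested (ext : (nat -> X) -> nat -> nat) (v : nat -> nat -> X) (j : nat) : nat -> nat :=
  match j with
  | O => fun k => k
  | S j' => fun k => nested ext v j' (ext (fun k' => v (nested ext v j' k') j') k)
  end.

Lemma nested_strictly_increasing ext v j :
  (forall u, strictly_increasing (ext u)) -> strictly_increasing (nested ext v j).
Proof.
  intros Hext. induction j as [| j IH]; intro n; simpl; [lia |].
  apply (strictly_increasing_lt _ IH), Hext.
Qed.

Lemma nested_factor ext v j k : (forall u, strictly_increasing (ext u)) ->
  exists rho, (forall n, (n <= rho n)%nat) /\ forall n, nested ext v (j + k) n = nested ext v j (rho n).
Proof.
  intros Hext. induction k as [| k [rho [h1 h2]]].
  - exists (fun n => n). split; [lia |]. intro n. rewrite Nat.add_0_r. reflexivity.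
  - set (e := ext (fun k' => v (nested ext v (j + k)%nat k') (j + k)%nat)).
    exists (fun n => rho (e n)). split.
    + intro n. pose proof (strictly_increasing_ge (e) (Hext _) n). specialize (h1 (e n)). lia.
    + intro n. rewrite Nat.add_succ_r. apply h2.
Qed.

Lemma seq_compact_diagonal : seq_compact d -> forall v : nat -> nat -> X,
  exists rho t, strictly_increasing rho /\ forall j, converges_along (fun k => v k j) rho (t j).
Proof.
  intros Hcpt v.
  destruct (choice (fun u (el : (nat -> nat) * X) =>
              strictly_increasing (fst el) /\ converges_along u (fst el) (snd el)))
    as [sel Hsel].
  { intro u. destruct (Hcpt u) as [rho [l H]]. exists (rho, l). exact H. }
  set (ext := fun u => fst (sel u)).
  assert (Hext : forall u, strictly_increasing (ext u)) by (intro u; apply Hsel).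
  exists (fun n => nested ext v (S n) n),
         (fun j => snd (sel (fun k => v (nested ext v j k) j))).
  split.
  - intro n. change (nested ext v (S (S n)) (S n))
      with (nested ext v (S n) (ext (fun k => v (nested ext v (S n) k) (S n)) (S n))).
    apply (strictly_increasing_lt _ (nested_strictly_increasing ext v (S n) Hext)).
    pose proof (strictly_increasing_ge _ (Hext (fun k => v (nested ext v (S n) k) (S n))) (S n)).
    lia.
  - intros j eps he.
    destruct (proj2 (Hsel (fun k => v (nested ext v j k) j)) eps he) as [K HK].
    exists (Nat.max K j). intros n hn.
    destruct (nested_factor ext v (S j) (n - j) Hext) as [rho [h1 h2]].
    replace (S n) with (S j + (n - j))%nat by lia. rewrite h2.
    apply HK. specialize (h1 n). lia.
Qed.

End Diagonal.

(** * Dyadic Birkhoff averages *)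

Section DyadicAverages.
Context {W : Type} (T : W -> W).

Fixpoint pow2_iter (N : nat) : W -> W :=
  match N with
  | O => T
  | S N' => fun s => pow2_iter N' (pow2_iter N' s)
  end.

(* [dyadic_avg N psi] is the Birkhoff average of psi over the first 2^N iterates of T. *)
Fixpoint dyadic_avg (N : nat) (psi : W -> R) : W -> R :=
  match N with
  | O => psi
  | S N' => fun s => (dyadic_avg N' psi s + dyadic_avg N' psi (pow2_iter N' s)) / 2
  end.

Lemma pow2_iter_comm N s : pow2_iter N (T s) = T (pow2_iter N s).
Proof.
  revert s. induction N as [| N IH]; intro s; simpl; [reflexivity |]. rewrite IH, IH. reflexivity.
Qed.

Lemma dyadic_avg_add N p q s :
  dyadic_avg N (fun s => p s + q s) s = dyadic_avg N p s + dyadic_avg N q s.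
Proof. revert s. induction N as [| N IH]; intro s; simpl; [reflexivity |]. rewrite IH, IH. field. Qed.

Lemma dyadic_avg_scal N c p s : dyadic_avg N (fun s => c * p s) s = c * dyadic_avg N p s.
Proof. revert s. induction N as [| N IH]; intro s; simpl; [reflexivity |]. rewrite IH, IH. field. Qed.

Lemma dyadic_avg_const N c s : dyadic_avg N (fun _ => c) s = c.
Proof. revert s. induction N as [| N IH]; intro s; simpl; [reflexivity |]. rewrite IH, IH. field. Qed.

Lemma dyadic_avg_mono N p q : (forall s, p s <= q s) -> forall s, dyadic_avg N p s <= dyadic_avg N q s.
Proof.
  intros H. induction N as [| N IH]; intro s; simpl; [apply H |].
  pose proof (IH s). pose proof (IH (pow2_iter N s)). lra.
Qed.

Lemma dyadic_avg_comp N p s : dyadic_avg N (fun s => p (T s)) s = dyadic_avg N p (T s).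
Proof.
  revert s. induction N as [| N IH]; intro s; simpl; [reflexivity |].
  rewrite IH, IH, pow2_iter_comm. reflexivity.
Qed.

Lemma dyadic_avg_telescope N p s :
  dyadic_avg N p (T s) - dyadic_avg N p s = (p (pow2_iter N s) - p s) / 2 ^ N.
Proof.
  revert s. induction N as [| N IH]; intro s; simpl; [field |].
  rewrite pow2_iter_comm.
  assert (hp : 0 < 2 ^ N) by (apply pow_lt; lra).
  replace ((dyadic_avg N p (T s) + dyadic_avg N p (T (pow2_iter N s))) / 2 -
           (dyadic_avg N p s + dyadic_avg N p (pow2_iter N s)) / 2)
    with (((dyadic_avg N p (T s) - dyadic_avg N p s) +
           (dyadic_avg N p (T (pow2_iter N s)) - dyadic_avg N p (pow2_iter N s))) / 2)
    by field.
  rewrite IH, IH. field. lra.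
Qed.

End DyadicAverages.

(** * The orbit space of an open-dense defined map *)

Section Setting.
Variables (X : Type) (d : X -> X -> R) (U : X -> Prop) (f : X -> X).
Hypothesis Hmet : is_metric d.
Hypothesis Hcpt : seq_compact d.
Hypothesis Hf : open_dense_map d U f.
Hypothesis Hgood : good_iterates d U f.

Notation W := (GammaT d U f).
Notation C0G := (C0_Gamma d U f).
Notation sigma := (sigma_f d U f).
Notation pi1 := (pi_1 d U f).

Lemma d_refl x : d x x = 0.
Proof. apply (proj1 (proj2 Hmet)). reflexivity. Qed.

Lemma d_sym x y : d x y = d y x.
Proof. apply (proj1 (proj2 (proj2 Hmet))). Qed.

Lemma d_tri x y z : d x z <= d x y + d y z.
Proof. apply (proj2 (proj2 (proj2 Hmet))). Qed.

Lemma d_small_eq x y : (forall eps, 0 < eps -> d x y < eps) -> x = y.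
Proof.
  intros H. apply (proj1 (proj2 Hmet)). apply Rle_antisym; [| apply (proj1 Hmet)].
  apply Rle_plus_epsilon. intros e he. specialize (H e he). lra.
Qed.

Lemma Gamma_orbit y : Omega U f y -> Gamma d U f (fun n => Nat.iter n f y).
Proof. intros Hy N eps he. exists y. split; [exact Hy |]. intros n _. rewrite d_refl. exact he. Qed.

Definition orbit y (Hy : Omega U f y) : W := exist _ _ (Gamma_orbit y Hy).

Lemma Gamma_inhabited : inhabited X -> inhabited W.
Proof.
  intros [x0]. destruct (proj1 Hgood x0 1 ltac:(lra)) as [y [Hy _]]. constructor. exact (orbit y Hy).
Qed.

Lemma Gamma_limit (v : nat -> W) (rho : nat -> nat) (t : nat -> X) :
  (forall j, converges_along d (fun k => proj1_sig (v k) j) rho (t j)) -> Gamma d U f t.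
Proof.
  intros Hv N eps he.
  destruct (eventually_forall_le _ (fun j => Hv j (eps / 2) ltac:(lra)) N) as [K HK].
  destruct (proj2_sig (v (rho K)) N (eps / 2) ltac:(lra)) as [x [Hx Hd]].
  exists x. split; [exact Hx |]. intros n hn.
  specialize (HK K (le_n _) n hn). specialize (Hd n hn). cbv beta in HK.
  pose proof (d_tri (t n) (proj1_sig (v (rho K)) n) (Nat.iter n f x)).
  rewrite d_sym in HK. lra.
Qed.

(* A sequence on which |psi| blows up has, by the diagonal argument, a subsequence
   converging in Gamma, contradicting continuity at the limit. *)
Lemma C0_Gamma_bounded (psi : W -> R) : C0G psi -> bounded_fn psi.
Proof.
  intros Hpsi. apply NNPP. intro Hnb.
  destruct (choice (fun k s => INR k < Rabs (psi s))) as [u Hu].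
  { intro k. apply NNPP. intro Hn. apply Hnb. exists (INR k). intro s.
    apply Rnot_lt_le. intro h. apply Hn. exists s. exact h. }
  destruct (seq_compact_diagonal d Hcpt (fun k => proj1_sig (u k))) as [rho [t [Hrho Hconv]]].
  set (T := exist _ t (Gamma_limit u rho t Hconv) : W).
  destruct (Hpsi T 1 ltac:(lra)) as [N [dl [hdl Hdl]]].
  destruct (eventually_forall_le _ (fun j => Hconv j dl hdl) N) as [K HK].
  destruct (INR_unbounded (Rabs (psi T) + 1)) as [k0 hk0].
  set (n := Nat.max K k0).
  assert (Hc : Rabs (psi T - psi (u (rho n))) < 1).
  { apply Hdl. intros j hj. rewrite d_sym. apply (HK n); [unfold n; lia | exact hj]. }
  assert (Hn : INR k0 <= INR (rho n)).
  { apply le_INR. pose proof (strictly_increasing_ge _ Hrho n). unfold n in *. lia. }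
  specialize (Hu (rho n)).
  pose proof (Rabs_triang_inv (psi (u (rho n))) (psi T)).
  rewrite Rabs_minus_sym in Hc. lra.
Qed.

Lemma C0_le_on_dense (D : X -> Prop) (g h : X -> R) : is_dense d D -> C0 d g -> C0 d h ->
  (forall y, D y -> g y <= h y) -> forall x, g x <= h x.
Proof.
  intros HD Hg Hh H x. apply Rle_plus_epsilon. intros e he.
  destruct (Hg x (e / 2) ltac:(lra)) as [d1 [hd1 Hd1]].
  destruct (Hh x (e / 2) ltac:(lra)) as [d2 [hd2 Hd2]].
  destruct (HD x (Rmin d1 d2) (Rmin_pos _ _ hd1 hd2)) as [y [Dy dy]].
  pose proof (Rmin_l d1 d2). pose proof (Rmin_r d1 d2).
  specialize (Hd1 y ltac:(lra)). specialize (Hd2 y ltac:(lra)).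
  apply Rabs_def2 in Hd1. apply Rabs_def2 in Hd2.
  specialize (H y Dy). lra.
Qed.

Lemma C0_const c : C0 d (fun _ => c).
Proof. intros x eps he. exists 1. split; [lra |]. intros. rewrite Rminus_diag, Rabs_R0. exact he. Qed.

Lemma C0_add p q : C0 d p -> C0 d q -> C0 d (fun x => p x + q x).
Proof.
  intros Hp Hq x eps he.
  destruct (Hp x (eps / 2) ltac:(lra)) as [d1 [hd1 H1]].
  destruct (Hq x (eps / 2) ltac:(lra)) as [d2 [hd2 H2]].
  exists (Rmin d1 d2). split; [apply Rmin_pos; assumption |]. intros y hy.
  pose proof (Rmin_l d1 d2). pose proof (Rmin_r d1 d2).
  specialize (H1 y ltac:(lra)). specialize (H2 y ltac:(lra)).
  replace (p x + q x - (p y + q y)) with ((p x - p y) + (q x - q y)) by ring.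
  pose proof (Rabs_triang (p x - p y) (q x - q y)). lra.
Qed.

Lemma C0_scal c p : C0 d p -> C0 d (fun x => c * p x).
Proof.
  intros Hp x eps he. destruct (Rabs_mult_small c eps he) as [e [he' He]].
  destruct (Hp x e he') as [dl [hdl H]]. exists dl. split; [exact hdl |]. intros y hy.
  rewrite <- Rmult_minus_distr_l. apply He, H, hy.
Qed.

Lemma C0_Gamma_const c : C0G (fun _ => c).
Proof. intros s eps he. exists O, 1. split; [lra |]. intros. rewrite Rminus_diag, Rabs_R0. exact he. Qed.

Lemma C0_Gamma_scal c p : C0G p -> C0G (fun s => c * p s).
Proof.
  intros Hp s eps he. destruct (Rabs_mult_small c eps he) as [e [he' He]].
  destruct (Hp s e he') as [N [dl [hdl H]]]. exists N, dl. split; [exact hdl |]. intros t Ht.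
  rewrite <- Rmult_minus_distr_l. apply He, H, Ht.
Qed.

Lemma C0_Gamma_comp_sigma p : C0G p -> C0G (fun s => p (sigma s)).
Proof.
  intros Hp s eps he. destruct (Hp (sigma s) eps he) as [N [dl [hdl H]]].
  exists (S N), dl. split; [exact hdl |]. intros t Ht. apply H. intros n hn. apply Ht. lia.
Qed.

Lemma C0_Gamma_comp_pi1 phi : C0 d phi -> C0G (fun s => phi (pi1 s)).
Proof.
  intros Hphi s eps he. destruct (Hphi (proj1_sig s O) eps he) as [dl [hdl Hdl]].
  exists O, dl. split; [exact hdl |]. intros t Ht. apply Hdl, Ht. lia.
Qed.

Lemma C0_bounded phi : C0 d phi -> bounded_fn phi.
Proof.
  intros Hphi. destruct (C0_Gamma_bounded _ (C0_Gamma_comp_pi1 phi Hphi)) as [B HB].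
  assert (Hom : forall y, Omega U f y -> - B <= phi y <= B).
  { intros y Hy. apply Rabs_le_between, (HB (orbit y Hy)). }
  exists B. intro x. apply Rabs_le. split.
  - apply (C0_le_on_dense (Omega U f) (fun _ => - B) phi (proj1 Hgood) (C0_const _) Hphi).
    intros y Hy. apply Hom, Hy.
  - apply (C0_le_on_dense (Omega U f) phi (fun _ => B) (proj1 Hgood) Hphi (C0_const _)).
    intros y Hy. apply Hom, Hy.
Qed.

Lemma Gamma_step_in_domain s : Gamma d U f s -> U (s O) -> s 1%nat = f (s O).
Proof.
  intros Hs hU. apply d_small_eq. intros eps he.
  destruct (proj2 (proj2 Hf) (s O) hU (eps / 2) ltac:(lra)) as [dl [hdl Hdl]].
  destruct (Hs 1%nat (Rmin dl (eps / 2)) ltac:(apply Rmin_pos; lra)) as [x [[Ux _] Hx]].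
  pose proof (Hx O ltac:(lia)) as h0. pose proof (Hx 1%nat ltac:(lia)) as h1. simpl in h0, h1.
  pose proof (Rmin_l dl (eps / 2)). pose proof (Rmin_r dl (eps / 2)).
  specialize (Hdl x Ux ltac:(lra)).
  pose proof (d_tri (s 1%nat) (f x) (f (s O))). rewrite (d_sym (f x)) in *. lra.
Qed.

Lemma Gamma_step_dominated phi psi : C0 d phi -> dominates_E d U f phi psi ->
  forall s, Gamma d U f s -> phi (s 1%nat) <= psi (s O).
Proof.
  intros Hphi Hdom s Hs. destruct (Hdom (s O)) as [HU HnU].
  destruct (classic (U (s O))) as [hU | hU].
  - rewrite (Gamma_step_in_domain s Hs hU). apply HU, hU.
  - apply Rle_plus_epsilon. intros eps he.
    destruct (HnU hU (eps / 2) ltac:(lra)) as [dl [hdl Hdl]].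
    destruct (Hphi (s 1%nat) (eps / 2) ltac:(lra)) as [d2 [hd2 Hd2]].
    destruct (Hs 1%nat (Rmin dl d2) ltac:(apply Rmin_pos; lra)) as [x [[Ux _] Hx]].
    pose proof (Hx O ltac:(lia)) as h0. pose proof (Hx 1%nat ltac:(lia)) as h1. simpl in h0, h1.
    pose proof (Rmin_l dl d2). pose proof (Rmin_r dl d2).
    specialize (Hdl x Ux ltac:(lra)). specialize (Hd2 (f x) ltac:(lra)).
    apply Rabs_def2 in Hd2. lra.
Qed.

Lemma dominates_E_const phi B : (forall x, Rabs (phi x) <= B) -> dominates_E d U f phi (fun _ => B).
Proof.
  intros HB x. split.
  - intros _. apply (Rabs_le_between _ _ (HB (f x))).
  - intros _ eps he. exists 1. split; [lra |]. intros y _ _.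
    pose proof (Rabs_le_between _ _ (HB (f y))). lra.
Qed.

Lemma pushf_nonempty (mu : (X -> R) -> R) phi : C0 d phi ->
  exists r, exists psi, C0 d psi /\ dominates_E d U f phi psi /\ r = mu psi.
Proof.
  intros Hphi. destruct (C0_bounded phi Hphi) as [B HB].
  exists (mu (fun _ => B)), (fun _ => B).
  split; [apply C0_const | split; [apply dominates_E_const, HB | reflexivity]].
Qed.

Theorem push_pi1_le_pushf (muh : (W -> R) -> R) :
  is_SMplus C0G muh -> SM_eq C0G (push sigma muh) muh ->
  SM_le (C0 d) (push pi1 muh) (pushf d U f (push pi1 muh)).
Proof.
  intros [_ [_ [_ Hmono]]] Hinv phi Hphi.
  apply le_Rinf; [apply pushf_nonempty, Hphi |].
  intros r [psi [Hpsi [Hdom ->]]]. unfold push.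
  rewrite <- (Hinv _ (C0_Gamma_comp_pi1 phi Hphi)). unfold push.
  apply Hmono.
  - apply (C0_Gamma_comp_sigma (fun s => phi (pi1 s))), C0_Gamma_comp_pi1, Hphi.
  - apply C0_Gamma_comp_pi1, Hpsi.
  - intro s. apply (Gamma_step_dominated phi psi Hphi Hdom), (proj2_sig s).
Qed.

(** * Lifting an invariant submeasure to the orbit space *)

Section InvariantSubmeasure.
Variable mu0 : (X -> R) -> R.
Hypothesis Hsm : is_SMplus (C0 d) mu0.
Hypothesis Hinv : SM_eq (C0 d) (pushf d U f mu0) mu0.

Lemma mu0_add p q : C0 d p -> C0 d q -> mu0 (fun x => p x + q x) <= mu0 p + mu0 q.
Proof. apply (proj1 Hsm). Qed.

Lemma mu0_hom c p : 0 <= c -> C0 d p -> mu0 (fun x => c * p x) = c * mu0 p.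
Proof. apply (proj1 (proj2 Hsm)). Qed.

Lemma mu0_mono p q : C0 d p -> C0 d q -> (forall x, p x <= q x) -> mu0 p <= mu0 q.
Proof. apply (proj2 (proj2 (proj2 Hsm))). Qed.

Definition mass : R := mu0 (fun _ => 1).

Lemma mu0_const c : 0 <= c -> mu0 (fun _ => c) = c * mass.
Proof.
  intros hc. unfold mass. rewrite <- (mu0_hom c (fun _ => 1) hc (C0_const 1)).
  f_equal. extensionality x. ring.
Qed.

(* For c < 0, subadditivity gives 0 = mu0 (1 + (-1)) <= mass + mu0 (-1). *)
Lemma mu0_const_ge c : c * mass <= mu0 (fun _ => c).
Proof.
  destruct (Rle_or_lt 0 c) as [hc | hc]; [rewrite mu0_const; lra |].
  replace (fun _ : X => c) with (fun x : X => (- c) * (fun _ => -1) x)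
    by (extensionality x; ring).
  rewrite mu0_hom by (lra || apply C0_const).
  pose proof (mu0_add (fun _ => 1) (fun _ => -1) (C0_const _) (C0_const _)) as h.
  cbv beta in h. replace (fun _ : X => 1 + -1) with (fun _ : X => 0 * 1) in h
    by (extensionality x; ring).
  rewrite (mu0_hom 0 (fun _ => 1)) in h by (lra || apply C0_const). fold mass in h.
  assert (- c * (- mass) <= - c * mu0 (fun _ => -1)) by (apply Rmult_le_compat_l; lra).
  lra.
Qed.

Lemma mass_nonneg : 0 <= mass.
Proof.
  pose proof (mu0_const_ge (-1)).
  pose proof (mu0_mono (fun _ => -1) (fun _ => 1) (C0_const _) (C0_const _) ltac:(intro; lra)).
  unfold mass in *. lra.
Qed.

Definition shift_controlled (T : W -> W) : Prop :=
  forall g eps, C0 d g -> 0 < eps -> exists h, C0 d h /\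
    mu0 h <= mu0 g + eps /\ forall s, g (pi1 (T s)) <= h (pi1 s).

(* This is where f_*(mu0) = mu0 enters: an almost optimal psi >= E(g o f) is such an h. *)
Lemma shift_controlled_sigma : shift_controlled sigma.
Proof.
  intros g eps Hg he. pose proof (Hinv g Hg) as E. unfold pushf in E.
  destruct (C0_bounded g Hg) as [B HB].
  destruct (Rinf_approx _ (mu0 (fun _ => - B)) eps (pushf_nonempty mu0 g Hg))
    as [r [[psi [Hpsi [Hdom ->]]] Hr]].
  - intros r [psi [Hpsi [Hdom ->]]]. apply mu0_mono; [apply C0_const | exact Hpsi |].
    apply (C0_le_on_dense U (fun _ => - B) psi (proj1 (proj2 Hf)) (C0_const _) Hpsi).
    intros y Uy. pose proof (Rabs_le_between _ _ (HB (f y))). pose proof (proj1 (Hdom y) Uy). lra.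
  - exact he.
  - exists psi. split; [exact Hpsi | split].
    + rewrite E in Hr. lra.
    + intro s. apply (Gamma_step_dominated g psi Hg Hdom), (proj2_sig s).
Qed.

Lemma shift_controlled_comp T1 T2 :
  shift_controlled T1 -> shift_controlled T2 -> shift_controlled (fun s => T1 (T2 s)).
Proof.
  intros H1 H2 g eps Hg he.
  destruct (H1 g (eps / 2) Hg ltac:(lra)) as [h1 [Hh1 [a1 b1]]].
  destruct (H2 h1 (eps / 2) Hh1 ltac:(lra)) as [h2 [Hh2 [a2 b2]]].
  exists h2. split; [exact Hh2 | split; [lra |]]. intro s. eapply Rle_trans; [apply b1 | apply b2].
Qed.

Lemma shift_controlled_pow2_iter N : shift_controlled (pow2_iter sigma N).
Proof.
  induction N as [| N IH]; simpl; [apply shift_controlled_sigma |].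
  apply shift_controlled_comp; assumption.
Qed.

Definition upper_values (psi : W -> R) (r : R) : Prop :=
  exists N g, C0 d g /\ (forall s, dyadic_avg sigma N psi s <= g (pi1 s)) /\ r = mu0 g.

Definition upper (psi : W -> R) : R := Rinf (upper_values psi).

Lemma upper_values_nonempty psi : bounded_fn psi -> exists r, upper_values psi r.
Proof.
  intros [B HB]. exists (mu0 (fun _ => B)), O, (fun _ => B).
  split; [apply C0_const | split; [| reflexivity]].
  intro s. apply (Rabs_le_between _ _ (HB s)).
Qed.

Lemma upper_values_lower_bound psi c :
  (forall s, c <= psi s) -> is_lower_bound (upper_values psi) (mu0 (fun _ => c)).
Proof.
  intros H r [N [g [Hg [Hle ->]]]]. apply mu0_mono; [apply C0_const | exact Hg |].
  apply (C0_le_on_dense (Omega U f) (fun _ => c) g (proj1 Hgood) (C0_const _) Hg).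
  intros y Hy. specialize (Hle (orbit y Hy)).
  pose proof (dyadic_avg_mono sigma N (fun _ => c) psi H (orbit y Hy)) as h.
  rewrite dyadic_avg_const in h. cbv beta in h. simpl in Hle. lra.
Qed.

Lemma upper_le psi N g : bounded_fn psi -> C0 d g ->
  (forall s, dyadic_avg sigma N psi s <= g (pi1 s)) -> upper psi <= mu0 g.
Proof.
  intros Hpsi Hg H. destruct (bounded_fn_lower psi Hpsi) as [c Hc].
  apply (Rinf_le _ _ _ (upper_values_lower_bound psi c Hc)). exists N, g. auto.
Qed.

Lemma upper_ge psi a : bounded_fn psi -> (forall r, upper_values psi r -> a <= r) -> a <= upper psi.
Proof. intros Hpsi H. apply le_Rinf; [apply upper_values_nonempty, Hpsi | exact H]. Qed.

Lemma upper_approx psi eps : bounded_fn psi -> 0 < eps -> exists N g, C0 d g /\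
  (forall s, dyadic_avg sigma N psi s <= g (pi1 s)) /\ mu0 g < upper psi + eps.
Proof.
  intros Hpsi he. destruct (bounded_fn_lower psi Hpsi) as [c Hc].
  destruct (Rinf_approx _ _ eps (upper_values_nonempty psi Hpsi)
              (upper_values_lower_bound psi c Hc) he) as [r [[N [g [Hg [Hle ->]]]] Hr]].
  exists N, g. auto.
Qed.

Lemma upper_values_refine psi N g : C0 d g -> (forall s, dyadic_avg sigma N psi s <= g (pi1 s)) ->
  forall k eps, 0 < eps -> exists g', C0 d g' /\ mu0 g' <= mu0 g + eps /\
    forall s, dyadic_avg sigma (k + N) psi s <= g' (pi1 s).
Proof.
  intros Hg Hle k. induction k as [| k IH]; intros eps he.
  - exists g. split; [exact Hg | split; [lra | exact Hle]].
  - destruct (IH (eps / 2) ltac:(lra)) as [g1 [Hg1 [a1 b1]]].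
    destruct (shift_controlled_pow2_iter (k + N) g1 (eps / 2) Hg1 ltac:(lra)) as [h [Hh [a2 b2]]].
    exists (fun x => / 2 * (fun x => g1 x + h x) x).
    split; [apply C0_scal, C0_add; assumption | split].
    + rewrite mu0_hom by (lra || apply C0_add; assumption).
      pose proof (mu0_add g1 h Hg1 Hh). lra.
    + intro s. simpl. pose proof (b1 s). pose proof (b1 (pow2_iter sigma (k + N) s)).
      specialize (b2 s). lra.
Qed.

Lemma upper_add p q : bounded_fn p -> bounded_fn q -> upper (fun s => p s + q s) <= upper p + upper q.
Proof.
  intros Hp Hq. apply Rle_plus_epsilon. intros eps he.
  destruct (upper_approx p (eps / 4) Hp ltac:(lra)) as [N1 [g1 [Hg1 [Hl1 Hm1]]]].
  destruct (upper_approx q (eps / 4) Hq ltac:(lra)) as [N2 [g2 [Hg2 [Hl2 Hm2]]]].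
  destruct (upper_values_refine p N1 g1 Hg1 Hl1 N2 (eps / 4) ltac:(lra)) as [g1' [Hg1' [a1 b1]]].
  destruct (upper_values_refine q N2 g2 Hg2 Hl2 N1 (eps / 4) ltac:(lra)) as [g2' [Hg2' [a2 b2]]].
  rewrite Nat.add_comm in b2.
  assert (Hsum : upper (fun s => p s + q s) <= mu0 (fun x => g1' x + g2' x)).
  { apply (upper_le _ (N2 + N1)); [apply bounded_fn_add; assumption | apply C0_add; assumption |].
    intro s. rewrite dyadic_avg_add. specialize (b1 s). specialize (b2 s). lra. }
  pose proof (mu0_add g1' g2' Hg1' Hg2'). lra.
Qed.

Lemma upper_hom c p : 0 < c -> bounded_fn p -> upper (fun s => c * p s) = c * upper p.
Proof.
  intros hc Hp. assert (Hcp : bounded_fn (fun s => c * p s)) by (apply bounded_fn_scal, Hp).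
  apply Rle_antisym.
  - assert (H : upper (fun s => c * p s) / c <= upper p).
    { apply upper_ge; [exact Hp |]. intros r [N [g [Hg [Hle ->]]]].
      pose proof (upper_le _ N (fun x => c * g x) Hcp (C0_scal c g Hg)) as h.
      rewrite mu0_hom in h by (lra || exact Hg).
      assert (upper (fun s => c * p s) <= c * mu0 g).
      { apply h. intro s. rewrite dyadic_avg_scal. apply Rmult_le_compat_l; [lra | apply Hle]. }
      apply (Rmult_le_reg_r c); [lra |]. field_simplify; lra. }
    apply (Rmult_le_compat_l c) in H; [| lra]. field_simplify in H; lra.
  - apply upper_ge; [exact Hcp |]. intros r [N [g [Hg [Hle ->]]]].
    pose proof (upper_le p N (fun x => / c * g x) Hp (C0_scal _ g Hg)) as h.
    rewrite mu0_hom in h; [| apply Rlt_le, Rinv_0_lt_compat; lra | exact Hg].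
    assert (upper p <= / c * mu0 g).
    { apply h. intro s. specialize (Hle s). rewrite dyadic_avg_scal in Hle.
      apply (Rmult_le_reg_l c); [lra |]. field_simplify; lra. }
    apply (Rmult_le_compat_l c) in H; [| lra]. field_simplify in H; lra.
Qed.

Lemma upper_const c : c * mass <= upper (fun _ => c).
Proof.
  apply upper_ge; [apply bounded_fn_const |]. intros r Hr.
  eapply Rle_trans; [apply mu0_const_ge |].
  apply (upper_values_lower_bound (fun _ => c) c); [intro; lra | exact Hr].
Qed.

Lemma upper_le_const p M : bounded_fn p -> 0 <= M -> (forall s, p s <= M) -> upper p <= M * mass.
Proof.
  intros Hp hM H. rewrite <- mu0_const by exact hM.
  apply (upper_le p O); [exact Hp | apply C0_const | exact H].
Qed.

Lemma upper_pi1 phi : C0 d phi -> upper (fun s => phi (pi1 s)) <= mu0 phi.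
Proof.
  intros Hphi. apply (upper_le _ O phi); [| exact Hphi | intro s; apply Rle_refl].
  apply C0_Gamma_bounded, C0_Gamma_comp_pi1, Hphi.
Qed.

Lemma upper_nonpos p : bounded_fn p ->
  (forall eps, 0 < eps -> exists N, forall s, dyadic_avg sigma N p s <= eps) -> upper p <= 0.
Proof.
  intros Hp H. apply Rle_plus_epsilon. intros eps he. pose proof mass_nonneg as hm.
  destruct (H (eps / (mass + 1)) ltac:(apply Rdiv_lt_0_compat; lra)) as [N HN].
  assert (h : upper p <= eps / (mass + 1) * mass).
  { rewrite <- mu0_const by (apply Rlt_le, Rdiv_lt_0_compat; lra).
    apply (upper_le p N); [exact Hp | apply C0_const | exact HN]. }
  assert (eps / (mass + 1) * mass <= eps).
  { apply (Rmult_le_reg_r (mass + 1)); [lra |]. field_simplify; [| lra]. nra. }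
  lra.
Qed.

(* The dyadic averages of a coboundary telescope to O(2^-N). *)
Lemma upper_coboundary p : bounded_fn p -> upper (fun s => p (sigma s) + (-1) * p s) <= 0.
Proof.
  intros Hp. apply upper_nonpos.
  { apply bounded_fn_add; [apply bounded_fn_comp | apply bounded_fn_scal]; exact Hp. }
  intros eps he. destruct Hp as [B HB]. destruct (pow2_unbounded (2 * B) eps he) as [N HN].
  exists N. intro s. rewrite dyadic_avg_add, dyadic_avg_scal, dyadic_avg_comp.
  replace (dyadic_avg sigma N p (sigma s) + -1 * dyadic_avg sigma N p s)
    with (dyadic_avg sigma N p (sigma s) - dyadic_avg sigma N p s) by ring.
  rewrite dyadic_avg_telescope.
  assert (hp : 0 < 2 ^ N) by (apply pow_lt; lra).
  pose proof (Rabs_le_between _ _ (HB s)). pose proof (Rabs_le_between _ _ (HB (pow2_iter sigma N s))).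
  apply (Rmult_le_reg_r (2 ^ N)); [lra |]. field_simplify; lra.
Qed.

Section DominatedFunctional.
Variable L : (W -> R) -> R.
Hypothesis L_add : forall x y, bounded_fn x -> bounded_fn y -> L (fun s => x s + y s) = L x + L y.
Hypothesis L_scal : forall c x, bounded_fn x -> L (fun s => c * x s) = c * L x.
Hypothesis L_upper : forall x, bounded_fn x -> L x <= upper x.

Lemma dominated_sub a b : bounded_fn a -> bounded_fn b -> L (fun s => a s + (-1) * b s) = L a - L b.
Proof. intros Ha Hb. rewrite L_add, L_scal by (apply bounded_fn_scal || idtac; assumption). ring. Qed.

Lemma dominated_mono a b : bounded_fn a -> bounded_fn b -> (forall s, a s <= b s) -> L a <= L b.
Proof.
  intros Ha Hb Hab. assert (Hd : bounded_fn (fun s => a s + (-1) * b s))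
    by (apply bounded_fn_add, bounded_fn_scal; assumption).
  pose proof (L_upper _ Hd) as h. rewrite dominated_sub in h by assumption.
  assert (upper (fun s => a s + (-1) * b s) <= 0 * mass)
    by (apply upper_le_const; [exact Hd | lra | intro s; specialize (Hab s); lra]).
  lra.
Qed.

Lemma dominated_bound psi M : bounded_fn psi -> 0 <= M -> (forall s, Rabs (psi s) <= M) ->
  Rabs (L psi) <= mass * M.
Proof.
  intros Hpsi hM HM. apply Rabs_le. split.
  - pose proof (L_upper _ (bounded_fn_scal (-1) _ Hpsi)) as h. rewrite L_scal in h by exact Hpsi.
    assert (upper (fun s => -1 * psi s) <= M * mass).
    { apply upper_le_const; [apply bounded_fn_scal, Hpsi | exact hM |].
      intro s. pose proof (Rabs_le_between _ _ (HM s)). lra. }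
    lra.
  - pose proof (L_upper _ Hpsi).
    assert (upper psi <= M * mass).
    { apply upper_le_const; [exact Hpsi | exact hM |]. intro s. apply (Rabs_le_between _ _ (HM s)). }
    lra.
Qed.

Lemma dominated_shift_le q : bounded_fn q -> L (fun s => q (sigma s)) <= L q.
Proof.
  intros Hq. pose proof (bounded_fn_comp sigma q Hq) as Hqs.
  pose proof (L_upper _ (bounded_fn_add _ _ Hqs (bounded_fn_scal (-1) _ Hq))) as h.
  cbv beta in h. rewrite (dominated_sub (fun s => q (sigma s))) in h by assumption.
  pose proof (upper_coboundary q Hq). lra.
Qed.

Lemma dominated_shift_invariant psi : bounded_fn psi -> L (fun s => psi (sigma s)) = L psi.
Proof.
  intros Hpsi. apply Rle_antisym; [apply dominated_shift_le, Hpsi |].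
  pose proof (dominated_shift_le _ (bounded_fn_scal (-1) _ Hpsi)) as h. cbv beta in h.
  rewrite (L_scal (-1) (fun s => psi (sigma s))), L_scal in h
    by (apply bounded_fn_comp || idtac; exact Hpsi).
  lra.
Qed.

Lemma dominated_pi1 phi : C0 d phi -> L (fun s => phi (pi1 s)) <= mu0 phi.
Proof.
  intros Hphi. eapply Rle_trans; [apply L_upper | apply upper_pi1, Hphi].
  apply C0_Gamma_bounded, C0_Gamma_comp_pi1, Hphi.
Qed.

End DominatedFunctional.

Lemma nonzero_inhabited : SM_nonzero (C0 d) mu0 -> inhabited X.
Proof.
  intros [phi [Hphi Hnz]]. apply NNPP. intro hn. apply Hnz.
  replace phi with (fun x => 0 * phi x)
    by (extensionality x; exfalso; apply hn; constructor; exact x).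
  rewrite mu0_hom by (lra || exact Hphi). ring.
Qed.

Lemma mu0_bound phi M : C0 d phi -> 0 <= M -> (forall x, Rabs (phi x) <= M) ->
  Rabs (mu0 phi) <= mass * M.
Proof.
  intros Hphi hM HM. pose proof (fun x => Rabs_le_between _ _ (HM x)) as HM'. apply Rabs_le. split.
  - pose proof (mu0_const_ge (- M)).
    pose proof (mu0_mono (fun _ => - M) phi (C0_const _) Hphi ltac:(intro x; apply HM')). lra.
  - pose proof (mu0_const M hM).
    pose proof (mu0_mono phi (fun _ => M) Hphi (C0_const _) ltac:(intro x; apply HM')). lra.
Qed.

Lemma mass_pos : SM_nonzero (C0 d) mu0 -> 0 < mass.
Proof.
  intros Hnz. destruct (nonzero_inhabited Hnz) as [x0]. destruct Hnz as [phi [Hphi Hnz]].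
  destruct (C0_bounded phi Hphi) as [B HB].
  assert (hB : 0 <= B) by (pose proof (Rabs_pos (phi x0)); specialize (HB x0); lra).
  destruct (Rle_lt_or_eq_dec 0 mass mass_nonneg) as [h | h]; [exact h |].
  exfalso. apply Hnz. pose proof (mu0_bound phi B Hphi hB HB) as hb.
  rewrite <- h, Rmult_0_l in hb. apply Rabs_le_between in hb. lra.
Qed.

Lemma mu0_norm : inhabited X -> SMnorm (C0 d) mu0 = mass.
Proof.
  intros [x0]. apply SMnorm_attained; [apply mass_nonneg | apply C0_const | |].
  - apply Rabs_pos_eq, mass_nonneg.
  - intros phi M Hphi HM. apply mu0_bound; [exact Hphi | | exact HM].
    specialize (HM x0). pose proof (Rabs_pos (phi x0)). lra.
Qed.

Theorem exists_invariant_lift : SM_nonzero (C0 d) mu0 ->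
  exists muh0 : (W -> R) -> R,
    is_SMplus C0G muh0 /\ is_linear_fn C0G muh0 /\ SM_nonzero C0G muh0 /\
    SM_eq C0G (push sigma muh0) muh0 /\ SMnorm C0G muh0 = SMnorm (C0 d) mu0 /\
    SM_le (C0 d) (push pi1 muh0) mu0.
Proof.
  intros Hnz. pose proof (nonzero_inhabited Hnz) as HX.
  destruct (Gamma_inhabited HX) as [w0]. pose proof (mass_pos Hnz) as hm.
  destruct (hahn_banach W w0 bounded_fn upper mass bounded_fn_const bounded_fn_add bounded_fn_scal
              upper_add upper_hom upper_const) as [L [LA [LS [Lp L1]]]].
  pose proof C0_Gamma_bounded as Cb.
  assert (Lbound : forall a M, C0G a -> (forall w, Rabs (a w) <= M) -> Rabs (L a) <= mass * M).
  { intros a M Ha HM. apply dominated_bound; [assumption .. | apply Cb, Ha | | exact HM].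
    specialize (HM w0). pose proof (Rabs_pos (a w0)). lra. }
  exists L. split; [| split; [| split; [| split; [| split]]]].
  - split; [| split; [| split]].
    + intros a b Ha Hb. rewrite LA by (apply Cb; assumption). lra.
    + intros c a _ Ha. apply LS, Cb, Ha.
    + exists mass. exact Lbound.
    + intros a b Ha Hb. apply dominated_mono; assumption || apply Cb; assumption.
  - split; intros; [apply LA | apply LS]; apply Cb; assumption.
  - exists (fun _ => 1). split; [apply C0_Gamma_const | lra].
  - intros psi Hpsi. apply dominated_shift_invariant; [assumption .. | apply Cb, Hpsi].
  - rewrite mu0_norm by exact HX.
    apply SMnorm_attained; [lra | apply C0_Gamma_const | | exact Lbound].
    rewrite L1. apply Rabs_pos_eq. lra.
  - intros phi Hphi. apply dominated_pi1; assumption.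
Qed.

Definition admissible (muh : (W -> R) -> R) : Prop :=
  is_SMplus C0G muh /\ SM_le (C0 d) (push pi1 muh) mu0 /\ SM_eq C0G (push sigma muh) muh.

Lemma admissible_upper muh psi M : admissible muh -> C0G psi -> 0 <= M ->
  (forall w, psi w <= M) -> muh psi <= M * mass.
Proof.
  intros [[_ [Hh [_ Hmo]]] [Hle _]] Hpsi hM HM.
  eapply Rle_trans; [apply (Hmo psi (fun _ => M) Hpsi (C0_Gamma_const M) HM) |].
  replace (fun _ : W => M) with (fun _ : W => M * 1) by (extensionality w; ring).
  rewrite (Hh M (fun _ => 1) hM (C0_Gamma_const 1)).
  apply Rmult_le_compat_l; [exact hM | apply (Hle (fun _ => 1) (C0_const 1))].
Qed.

Lemma admissible_lower muh psi M : admissible muh -> C0G psi -> 0 <= M ->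
  (forall w, Rabs (psi w) <= M) -> - (M * mass) <= muh psi.
Proof.
  intros Hadm Hpsi hM HM. pose proof Hadm as [[Ha [Hh _]] _].
  pose proof (admissible_upper muh (fun w => -1 * psi w) M Hadm (C0_Gamma_scal _ _ Hpsi) hM
    ltac:(intro w; pose proof (Rabs_le_between _ _ (HM w)); lra)).
  pose proof (Ha psi (fun w => -1 * psi w) Hpsi (C0_Gamma_scal _ _ Hpsi)) as h. cbv beta in h.
  replace (fun w : W => psi w + -1 * psi w) with (fun w : W => 0 * psi w) in h
    by (extensionality w; ring).
  rewrite (Hh 0 psi (Rle_refl 0) Hpsi) in h. lra.
Qed.

Definition sup_admissible (psi : W -> R) : R :=
  - Rinf (fun r => exists muh, admissible muh /\ r = - muh psi).

Lemma sup_admissible_ge muh psi : admissible muh -> C0G psi -> muh psi <= sup_admissible psi.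
Proof.
  intros Hadm Hpsi. destruct (C0_Gamma_bounded psi Hpsi) as [B HB].
  unfold sup_admissible. apply Ropp_le_cancel. rewrite Ropp_involutive.
  apply (Rinf_le _ (- (Rabs B * mass))); [| eauto].
  intros r [muh' [Hadm' ->]]. apply Ropp_le_contravar.
  apply (admissible_upper muh' psi (Rabs B) Hadm' Hpsi (Rabs_pos B)).
  intro w. pose proof (Rabs_le_between _ _ (HB w)). pose proof (Rle_abs B). lra.
Qed.

Lemma sup_admissible_le psi a : (exists muh, admissible muh) ->
  (forall muh, admissible muh -> muh psi <= a) -> sup_admissible psi <= a.
Proof.
  intros [muh0 H0] H. unfold sup_admissible. apply Ropp_le_cancel. rewrite Ropp_involutive.
  apply le_Rinf; [eauto |]. intros r [muh [Hadm ->]]. apply Ropp_le_contravar, H, Hadm.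
Qed.

Section Supremum.
Variable muh0 : (W -> R) -> R.
Hypothesis Hmuh0 : admissible muh0.
Variable w0 : W.

Lemma sup_admissible_SMplus : is_SMplus C0G sup_admissible.
Proof.
  assert (Hex : exists muh, admissible muh) by eauto.
  split; [| split; [| split]].
  - intros a b Ha Hb. apply sup_admissible_le; [exact Hex |]. intros muh Hadm.
    pose proof (proj1 (proj1 Hadm) a b Ha Hb).
    pose proof (sup_admissible_ge muh a Hadm Ha). pose proof (sup_admissible_ge muh b Hadm Hb). lra.
  - intros c a hc Ha. assert (Hca : C0G (fun w => c * a w)) by (apply C0_Gamma_scal, Ha).
    assert (Hhom : forall muh, admissible muh -> muh (fun w => c * a w) = c * muh a)
      by (intros muh Hadm; apply (proj1 (proj2 (proj1 Hadm))); assumption).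
    destruct (Rle_lt_or_eq_dec 0 c hc) as [hc' | <-]; apply Rle_antisym.
    + apply sup_admissible_le; [exact Hex |]. intros muh Hadm. rewrite Hhom by exact Hadm.
      apply Rmult_le_compat_l, sup_admissible_ge; assumption.
    + assert (h : sup_admissible a <= sup_admissible (fun w => c * a w) / c).
      { apply sup_admissible_le; [exact Hex |]. intros muh Hadm.
        pose proof (sup_admissible_ge muh _ Hadm Hca) as h. rewrite Hhom in h by exact Hadm.
        apply (Rmult_le_reg_l c); [lra |]. field_simplify; lra. }
      apply (Rmult_le_compat_l c) in h; [| lra]. field_simplify in h; lra.
    + apply sup_admissible_le; [exact Hex |]. intros muh Hadm. rewrite Hhom by exact Hadm. lra.
    + eapply Rle_trans; [| apply (sup_admissible_ge muh0); assumption]. rewrite Hhom by exact Hmuh0. lra.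
  - exists mass. intros a M Ha HM.
    assert (hM : 0 <= M) by (specialize (HM w0); pose proof (Rabs_pos (a w0)); lra).
    assert (HM' : forall w, a w <= M) by (intro w; apply (Rabs_le_between _ _ (HM w))).
    pose proof (admissible_lower muh0 a M Hmuh0 Ha hM HM).
    pose proof (sup_admissible_ge muh0 a Hmuh0 Ha).
    assert (sup_admissible a <= M * mass).
    { apply sup_admissible_le; [exact Hex |]. intros muh Hadm. apply admissible_upper; assumption. }
    apply Rabs_le. lra.
  - intros a b Ha Hb Hab. apply sup_admissible_le; [exact Hex |]. intros muh Hadm.
    apply Rle_trans with (muh b); [apply (proj2 (proj2 (proj2 (proj1 Hadm)))); assumption |].
    apply sup_admissible_ge; assumption.
Qed.

Lemma sup_admissible_admissible : admissible sup_admissible.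
Proof.
  assert (Hex : exists muh, admissible muh) by eauto.
  split; [exact sup_admissible_SMplus | split].
  - intros phi Hphi. apply sup_admissible_le; [exact Hex |].
    intros muh [_ [Hle _]]. apply (Hle phi Hphi).
  - intros psi Hpsi. assert (Hs : C0G (fun s => psi (sigma s))) by (apply C0_Gamma_comp_sigma, Hpsi).
    assert (Hinv' : forall muh, admissible muh -> muh (fun s => psi (sigma s)) = muh psi)
      by (intros muh [_ [_ Hsh]]; apply (Hsh psi Hpsi)).
    unfold push. apply Rle_antisym; apply sup_admissible_le; try exact Hex; intros muh Hadm.
    + rewrite Hinv' by exact Hadm. apply sup_admissible_ge; assumption.
    + rewrite <- Hinv' by exact Hadm. apply sup_admissible_ge; assumption.
Qed.

End Supremum.

Theorem largest_admissible : SM_nonzero (C0 d) mu0 ->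
  exists mustar, admissible mustar /\ forall muh, admissible muh -> SM_le C0G muh mustar.
Proof.
  intros Hnz. destruct (Gamma_inhabited (nonzero_inhabited Hnz)) as [w0].
  destruct (exists_invariant_lift Hnz) as [muh0 [H1 [_ [_ [H4 [_ H6]]]]]].
  assert (Hmuh0 : admissible muh0) by (split; [| split]; assumption).
  exists sup_admissible. split; [apply (sup_admissible_admissible muh0 Hmuh0 w0) |].
  intros muh Hadm psi Hpsi. apply sup_admissible_ge; assumption.
Qed.

End InvariantSubmeasure.

End Setting.

Theorem theorem3p2 (X : Type) (d : X -> X -> R) (U : X -> Prop) (f : X -> X)
  (Hmet : is_metric d) (Hcpt : seq_compact d)
  (Hf : open_dense_map d U f) (Hgood : good_iterates d U f) :
  (* 1) *)
  (forall muh : (GammaT d U f -> R) -> R,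
     is_SMplus (C0_Gamma d U f) muh ->
     SM_eq (C0_Gamma d U f) (push (sigma_f d U f) muh) muh ->
     SM_le (C0 d) (push (pi_1 d U f) muh) (pushf d U f (push (pi_1 d U f) muh)))
  /\
  (* 2) *)
  (forall mu0 : (X -> R) -> R,
     is_SMplus (C0 d) mu0 -> SM_nonzero (C0 d) mu0 ->
     SM_eq (C0 d) (pushf d U f mu0) mu0 ->
     (exists muh0 : (GammaT d U f -> R) -> R,
        is_SMplus (C0_Gamma d U f) muh0 /\ is_linear_fn (C0_Gamma d U f) muh0 /\
        SM_nonzero (C0_Gamma d U f) muh0 /\
        SM_eq (C0_Gamma d U f) (push (sigma_f d U f) muh0) muh0 /\
        SMnorm (C0_Gamma d U f) muh0 = SMnorm (C0 d) mu0 /\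
        SM_le (C0 d) (push (pi_1 d U f) muh0) mu0)
     /\
     (exists mustar : (GammaT d U f -> R) -> R,
        (is_SMplus (C0_Gamma d U f) mustar /\
         SM_le (C0 d) (push (pi_1 d U f) mustar) mu0 /\
         SM_eq (C0_Gamma d U f) (push (sigma_f d U f) mustar) mustar) /\
        forall muh : (GammaT d U f -> R) -> R,
          is_SMplus (C0_Gamma d U f) muh ->
          SM_le (C0 d) (push (pi_1 d U f) muh) mu0 ->
          SM_eq (C0_Gamma d U f) (push (sigma_f d U f) muh) muh ->
          SM_le (C0_Gamma d U f) muh mustar)).
Proof.
  split.
  - intros muh. apply push_pi1_le_pushf; assumption.
  - intros mu0 Hsm Hnz Hinv. split.
    + apply exists_invariant_lift; assumption.
    + destruct (largest_admissible X d U f Hmet Hcpt Hf Hgood mu0 Hsm Hinv Hnz)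
        as [mustar [Hstar Hmax]].
      exists mustar. split; [exact Hstar |].
      intros muh H1 H2 H3. apply Hmax. split; [| split]; assumption.
Qed.
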